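(* Suppose that Assumptions (A1)–(A5) hold. If $(u,m)$ solves Problem 1, then $u,m\in C^{2,\frac12}(\mathbb{T})$.
   Context: Let $\mathbb{T}=\mathbb{R}/\mathbb{Z}$ be the one-dimensional torus; functions on $\mathbb{T}$ are identified with $1$-periodic functions on $\mathbb{R}$. $C^{2,\frac12}(\mathbb{T})$ denotes the functions of class $C^2$ on $\mathbb{T}$ whose second derivative is $\frac12$-Hölder continuous. Let $H:\mathbb{R}\to\mathbb{R}$ be of class $C^2$, $V:\mathbb{T}\to\mathbb{R}$ continuous, $\alpha>0$, and $0<\epsilon\le 1$. We say $(u,m)$ solves Problem 1 if $u,m\in C^2(\mathbb{T})$, $m>0$ on $\mathbb{T}$, and on $\mathbb{T}$: $$u-u_{xx}+H(u_x)+V(x)=m^\alpha+\epsilon(m-m_{xx}),\qquad m-m_{xx}-(H'(u_x)m)_x=1-\epsilon(u-u_{xx}).$$ Assumptions: (A1) there exist constants $C_1,C_2,C_3>0$ and $\gamma>1$ such that $-C_1+C_2|p|^\gamma\le H(p)\le C_1+C_3|p|^\gamma$ for all $p\in\mathbb{R}$. (A2) There exist constants $\tilde C_1,\tilde C_2,\tilde C_3>0$ such that $-\tilde C_1+\tilde C_2|p|^\gamma\le pH'(p)-H(p)\le \tilde C_1+\tilde C_3|p|^\gamma$ for all $p$ (same $\gamma$ as in (A1)). (A3) $V$ is of class $C^2$. (A4) $H$ is convex. (A5) $H$ is of class $C^4$. *)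

From Stdlib Require Import Reals.
Open Scope R_scope.

(* 1-periodic functions = functions on the torus T = R/Z *)
Definition periodic1 (f : R -> R) : Prop := forall x, f (x + 1) = f x.

Fixpoint Ck (k : nat) (f : R -> R) : Prop :=
  match k with
  | O => continuity f
  | S k' => exists f' : R -> R,
      (forall x, derivable_pt_lim f x (f' x)) /\ Ck k' f'
  end.

Definition holder_half (f : R -> R) : Prop :=
  exists C : R, forall x y, Rabs (f x - f y) <= C * sqrt (Rabs (x - y)).

Definition convex_fun (f : R -> R) : Prop :=
  forall x y t, 0 <= t <= 1 ->
    f (t * x + (1 - t) * y) <= t * f x + (1 - t) * f y.

(* The system of Problem 1 is linear in the pair (u_xx, m_xx) once the flux
   derivative (H'(u_x) m)_x = H''(u_x) u_xx m + H'(u_x) m_x is expanded, and its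
   determinant 1 + eps (H''(u_x) m + eps) is positive because H is convex.
   Solving it expresses u_xx and m_xx as C^1 combinations of u, u_x, m, m_x, V,
   H, H', H''; a periodic C^1 function is bounded and Lipschitz, hence
   1/2-Hoelder. *)
From Stdlib Require Import Reals Lra Psatz ZArith FunctionalExtensionality.
Open Scope R_scope.

Lemma derivable_pt_lim_continuity (f f' : R -> R) :
  (forall x, derivable_pt_lim f x (f' x)) -> continuity f.
Proof. intros Hd x. apply derivable_continuous_pt. exists (f' x). apply Hd. Qed.

Definition is_C1 (f : R -> R) : Prop :=
  exists f', (forall x, derivable_pt_lim f x (f' x)) /\ continuity f'.

Lemma Ck_continuity (k : nat) (f : R -> R) : Ck k f -> continuity f.
Proof.
  destruct k as [|k]; [easy|].
  intros [f' [Df _]]. exact (derivable_pt_lim_continuity f f' Df).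
Qed.

Lemma Ck_S_C1 (k : nat) (f : R -> R) : Ck (S k) f -> is_C1 f.
Proof.
  intros [f' [Df Cf']]. exists f'. split; [exact Df | exact (Ck_continuity k f' Cf')].
Qed.

Lemma C2_C1 (f f1 f2 : R -> R) :
  (forall x, derivable_pt_lim f x (f1 x)) -> (forall x, derivable_pt_lim f1 x (f2 x)) ->
  continuity f2 -> is_C1 f /\ is_C1 f1.
Proof.
  intros Df Df1 Cf2. split; [exists f1 | exists f2]; split; try assumption.
  exact (derivable_pt_lim_continuity f1 f2 Df1).
Qed.

Lemma C1_ext (f g : R -> R) : (forall x, f x = g x) -> is_C1 f -> is_C1 g.
Proof.
  intros E Cf. replace g with f; [exact Cf | now apply functional_extensionality].
Qed.

Lemma C1_const (c : R) : is_C1 (fun _ => c).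
Proof.
  exists (fun _ => 0). split; [intros; apply derivable_pt_lim_const |].
  intros x; now apply continuity_const.
Qed.

Lemma C1_plus (f g : R -> R) : is_C1 f -> is_C1 g -> is_C1 (fun x => f x + g x).
Proof.
  intros [f' [Df Cf']] [g' [Dg Cg']]. exists (fun x => f' x + g' x). split.
  - intros x. now apply (derivable_pt_lim_plus f g).
  - now apply (continuity_plus f' g').
Qed.

Lemma C1_opp (f : R -> R) : is_C1 f -> is_C1 (fun x => - f x).
Proof.
  intros [f' [Df Cf']]. exists (fun x => - f' x). split.
  - intros x. now apply (derivable_pt_lim_opp f).
  - now apply (continuity_opp f').
Qed.

Lemma C1_minus (f g : R -> R) : is_C1 f -> is_C1 g -> is_C1 (fun x => f x - g x).
Proof.
  intros [f' [Df Cf']] [g' [Dg Cg']]. exists (fun x => f' x - g' x). split.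
  - intros x. now apply (derivable_pt_lim_minus f g).
  - now apply (continuity_minus f' g').
Qed.

Lemma C1_mult (f g : R -> R) : is_C1 f -> is_C1 g -> is_C1 (fun x => f x * g x).
Proof.
  intros [f' [Df Cf']] [g' [Dg Cg']].
  pose proof (derivable_pt_lim_continuity f f' Df) as Cf.
  pose proof (derivable_pt_lim_continuity g g' Dg) as Cg.
  exists (fun x => f' x * g x + f x * g' x). split.
  - intros x. now apply (derivable_pt_lim_mult f g).
  - apply (continuity_plus (fun x => f' x * g x) (fun x => f x * g' x)).
    + now apply (continuity_mult f' g).
    + now apply (continuity_mult f g').
Qed.

Lemma C1_div (f g : R -> R) :
  is_C1 f -> is_C1 g -> (forall x, g x <> 0) -> is_C1 (fun x => f x / g x).
Proof.
  intros [f' [Df Cf']] [g' [Dg Cg']] g_neq0.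
  pose proof (derivable_pt_lim_continuity f f' Df) as Cf.
  pose proof (derivable_pt_lim_continuity g g' Dg) as Cg.
  exists (fun x => (f' x * g x - g' x * f x) / (g x)²). split.
  - intros x. now apply (derivable_pt_lim_div f g).
  - apply (continuity_div (fun x => f' x * g x - g' x * f x) (fun x => (g x)²)).
    + apply (continuity_minus (fun x => f' x * g x) (fun x => g' x * f x)).
      * now apply (continuity_mult f' g).
      * now apply (continuity_mult g' f).
    + now apply (continuity_mult g g).
    + intros x. now apply Rmult_integral_contrapositive.
Qed.

Lemma C1_comp (F g : R -> R) : is_C1 F -> is_C1 g -> is_C1 (fun x => F (g x)).
Proof.
  intros [F' [DF CF']] [g' [Dg Cg']]. exists (fun x => F' (g x) * g' x). split.
  - intros x. now apply (derivable_pt_lim_comp g F).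
  - apply (continuity_mult (fun x => F' (g x)) g'); [| exact Cg'].
    apply (continuity_comp g F'); [exact (derivable_pt_lim_continuity g g' Dg) | exact CF'].
Qed.

Lemma C1_exp : is_C1 exp.
Proof.
  exists exp. split; [apply derivable_pt_lim_exp |].
  exact (derivable_pt_lim_continuity exp exp derivable_pt_lim_exp).
Qed.

Lemma C1_ln (f : R -> R) : is_C1 f -> (forall x, 0 < f x) -> is_C1 (fun x => ln (f x)).
Proof.
  intros [f' [Df Cf']] f_gt0. exists (fun x => / f x * f' x). split.
  - intros x. apply (derivable_pt_lim_comp f ln); [exact (Df x) |].
    now apply derivable_pt_lim_ln.
  - apply (continuity_mult (fun x => / f x) f'); [| exact Cf'].
    apply (continuity_inv f); [exact (derivable_pt_lim_continuity f f' Df) |].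
    intros x. specialize (f_gt0 x). lra.
Qed.

Lemma C1_Rpower (f : R -> R) (a : R) :
  is_C1 f -> (forall x, 0 < f x) -> is_C1 (fun x => Rpower (f x) a).
Proof.
  intros Cf f_gt0. unfold Rpower. apply (C1_comp exp (fun x => a * ln (f x))).
  - exact C1_exp.
  - apply C1_mult; [apply C1_const | now apply C1_ln].
Qed.

Ltac solve_C1 :=
  match goal with
  | |- is_C1 (fun _ => ?c) => apply C1_const
  | |- is_C1 (fun x => _ - _) => apply C1_minus; solve_C1
  | |- is_C1 (fun x => - _) => apply C1_opp; solve_C1
  | |- is_C1 (fun x => _ + _) => apply C1_plus; solve_C1
  | |- is_C1 (fun x => _ / _) => apply C1_div; [solve_C1 | solve_C1 | idtac]
  | |- is_C1 (fun x => _ * _) => apply C1_mult; solve_C1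
  | |- is_C1 (fun x => Rpower _ _) => apply C1_Rpower; [solve_C1 | idtac]
  | _ => assumption || (apply C1_comp; [assumption | solve_C1])
  end.

Lemma periodic1_derivative (f f' : R -> R) :
  periodic1 f -> (forall x, derivable_pt_lim f x (f' x)) -> periodic1 f'.
Proof.
  intros Pf Df x.
  assert (Shift : derivable_pt_lim (fun y => f (y + 1)) x (f' (x + 1) * 1)).
  { apply (derivable_pt_lim_comp (fun y => y + 1) f); [| apply Df].
    pose proof (derivable_pt_lim_plus id (fct_cte 1) x 1 0
                  (derivable_pt_lim_id x) (derivable_pt_lim_const 1 x)) as D.
    now rewrite Rplus_0_r in D. }
  replace (fun y => f (y + 1)) with f in Shift
    by (apply functional_extensionality; intros y; now rewrite Pf).
  pose proof (uniqueness_limite f x _ _ Shift (Df x)). lra.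
Qed.

Lemma periodic1_plus_INR (f : R -> R) : periodic1 f -> forall n x, f (x + INR n) = f x.
Proof.
  intros Pf n. induction n as [|n IH]; intros x.
  - now rewrite Rplus_0_r.
  - rewrite S_INR, <- Rplus_assoc, Pf. apply IH.
Qed.

Lemma periodic1_minus_IZR (f : R -> R) : periodic1 f -> forall z x, f (x - IZR z) = f x.
Proof.
  intros Pf z x. destruct (Z_le_gt_dec 0 z).
  - rewrite <- (Z2Nat.id z), <- INR_IZR_INZ by lia.
    rewrite <- (periodic1_plus_INR f Pf (Z.to_nat z) (x - INR (Z.to_nat z))).
    f_equal; ring.
  - replace z with (- Z.of_nat (Z.to_nat (- z)))%Z by lia.
    rewrite opp_IZR, <- INR_IZR_INZ, Rminus_def, Ropp_involutive.
    apply periodic1_plus_INR, Pf.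
Qed.

Lemma periodic1_continuity_bounded (f : R -> R) :
  periodic1 f -> continuity f -> exists M, 0 <= M /\ forall x, Rabs (f x) <= M.
Proof.
  intros Pf Cf.
  destruct (continuity_ab_maj (fun x => Rabs (f x)) 0 1) as [x0 [Max _]]; [lra | |].
  { intros y _. apply (continuity_comp f Rabs); [apply Cf | apply Rcontinuity_abs]. }
  exists (Rabs (f x0)). split; [apply Rabs_pos |].
  intros x. rewrite <- (periodic1_minus_IZR f Pf (Int_part x) x).
  apply Max. destruct (base_Int_part x). lra.
Qed.

Lemma derivative_bounded_lipschitz (f f' : R -> R) (L : R) :
  (forall x, derivable_pt_lim f x (f' x)) -> (forall x, Rabs (f' x) <= L) ->
  forall x y, Rabs (f x - f y) <= L * Rabs (x - y).
Proof.
  intros Df Bf'.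
  assert (Ordered : forall x y, x < y -> Rabs (f x - f y) <= L * Rabs (x - y)).
  { intros x y xy. destruct (MVT_cor2 f f' x y xy (fun c _ => Df c)) as [c [E _]].
    rewrite <- Rabs_Ropp, Ropp_minus_distr, E, Rabs_mult, (Rabs_minus_sym x y).
    apply Rmult_le_compat_r; [apply Rabs_pos | apply Bf']. }
  intros x y. destruct (Rtotal_order x y) as [xy | [<- | yx]].
  - now apply Ordered.
  - rewrite !Rminus_diag, Rabs_R0, Rmult_0_r. lra.
  - rewrite Rabs_minus_sym, (Rabs_minus_sym x y). now apply Ordered.
Qed.

Lemma lipschitz_bounded_holder_half (f : R -> R) (L M : R) :
  0 <= L -> 0 <= M -> (forall x, Rabs (f x) <= M) ->
  (forall x y, Rabs (f x - f y) <= L * Rabs (x - y)) -> holder_half f.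
Proof.
  intros L_ge0 M_ge0 Bf Lip. exists (L + 2 * M). intros x y.
  set (d := Rabs (x - y)).
  assert (d_ge0 : 0 <= d) by apply Rabs_pos.
  pose proof (sqrt_sqrt d d_ge0) as Sq. pose proof (sqrt_pos d).
  destruct (Rle_lt_dec d 1) as [d_le1 | d_gt1].
  - (* small increments: d <= sqrt d *)
    assert (sqrt d <= 1) by (rewrite <- sqrt_1; now apply sqrt_le_1_alt).
    assert (d <= sqrt d) by nra.
    specialize (Lip x y). fold d in Lip. nra.
  - (* large increments: 2 M <= 2 M sqrt d *)
    assert (1 <= sqrt d) by (rewrite <- sqrt_1; apply sqrt_le_1_alt; lra).
    assert (Rabs (f x - f y) <= 2 * M).
    { eapply Rle_trans; [apply Rabs_triang |]. rewrite Rabs_Ropp.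
      pose proof (Bf x); pose proof (Bf y). lra. }
    nra.
Qed.

Lemma periodic1_C1_holder_half (f : R -> R) : periodic1 f -> is_C1 f -> holder_half f.
Proof.
  intros Pf [f' [Df Cf']].
  destruct (periodic1_continuity_bounded f Pf (derivable_pt_lim_continuity f f' Df))
    as [M [M_ge0 Bf]].
  destruct (periodic1_continuity_bounded f' (periodic1_derivative f f' Pf Df) Cf')
    as [L [L_ge0 Bf']].
  exact (lipschitz_bounded_holder_half f L M L_ge0 M_ge0 Bf
           (derivative_bounded_lipschitz f f' L Df Bf')).
Qed.

Lemma continuity_pt_lt0_locally (f : R -> R) (p : R) :
  continuity_pt f p -> f p < 0 ->
  exists del, 0 < del /\ forall y, Rabs (y - p) < del -> f y < 0.
Proof.
  intros Cf fp_lt0. destruct (Cf (- f p)) as [del [del_gt0 Near]]; [lra |].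
  exists del. split; [exact del_gt0 |]. intros y yp.
  destruct (Req_dec y p) as [-> | y_neq_p]; [exact fp_lt0 |].
  assert (Rabs (f y - f p) < - f p) as Hy.
  { apply (Near y). split; [split; [exact I | congruence] | exact yp]. }
  apply Rabs_def2 in Hy. lra.
Qed.

Lemma second_difference_mean_value (f f1 f2 : R -> R) (p h : R) :
  (forall x, derivable_pt_lim f x (f1 x)) -> (forall x, derivable_pt_lim f1 x (f2 x)) ->
  0 < h -> exists c t, Rabs (c - p) < h /\ 0 < t /\
    f (p + h) + f (p - h) - 2 * f p = h * t * f2 c.
Proof.
  intros Df Df1 h_gt0.
  destruct (MVT_cor2 f f1 (p - h) p) as [a [Ea [a_lo a_hi]]]; [lra | auto |].
  destruct (MVT_cor2 f f1 p (p + h)) as [b [Eb [b_lo b_hi]]]; [lra | auto |].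
  destruct (MVT_cor2 f1 f2 a b) as [c [Ec [c_lo c_hi]]]; [lra | auto |].
  exists c, (b - a). split; [apply Rabs_def1; lra | split; [lra |]].
  replace (f (p + h) + f (p - h) - 2 * f p) with ((f (p + h) - f p) - (f p - f (p - h)))
    by ring.
  rewrite Ea, Eb.
  replace (f1 b * (p + h - p) - f1 a * (p - (p - h))) with (h * (f1 b - f1 a)) by ring.
  rewrite Ec. ring.
Qed.

Lemma convex_second_derivative_ge0 (f f1 f2 : R -> R) :
  convex_fun f -> (forall x, derivable_pt_lim f x (f1 x)) ->
  (forall x, derivable_pt_lim f1 x (f2 x)) -> continuity f2 -> forall p, 0 <= f2 p.
Proof.
  intros Cvx Df Df1 Cf2 p. destruct (Rle_lt_dec 0 (f2 p)) as [| f2p_lt0]; [assumption | exfalso].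
  destruct (continuity_pt_lt0_locally f2 p (Cf2 p) f2p_lt0) as [del [del_gt0 Neg]].
  destruct (second_difference_mean_value f f1 f2 p (del / 2) Df Df1)
    as [c [t [cp [t_gt0 E]]]]; [lra |].
  assert (f2 c < 0) by (apply Neg; lra).
  assert (Mid := Cvx (p + del / 2) (p - del / 2) (/ 2) ltac:(lra)).
  replace (/ 2 * (p + del / 2) + (1 - / 2) * (p - del / 2)) with p in Mid by field.
  assert (0 < del / 2 * t) by nra.
  nra.
Qed.

Lemma flux_derivative (H1 H2 u1 u2 m m1 : R -> R) (x : R) :
  (forall p, derivable_pt_lim H1 p (H2 p)) -> derivable_pt_lim u1 x (u2 x) ->
  derivable_pt_lim m x (m1 x) ->
  derivable_pt_lim (fun y => H1 (u1 y) * m y) x (H2 (u1 x) * u2 x * m x + H1 (u1 x) * m1 x).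
Proof.
  intros DH1 Du1 Dm.
  apply (derivable_pt_lim_mult (fun y => H1 (u1 y)) m); [| exact Dm].
  now apply (derivable_pt_lim_comp u1 H1).
Qed.

Lemma linear_system_solution (eps k a b x y : R) :
  0 < 1 + eps * k -> - x + eps * y = a -> - (k * x) - y = b ->
  x = - (a + eps * b) / (1 + eps * k) /\ y = - b - k * x.
Proof.
  intros det_gt0 Ea Eb. split; [| lra].
  apply (Rmult_eq_reg_r (1 + eps * k)); [| lra].
  unfold Rdiv. rewrite Rmult_assoc, Rinv_l, Rmult_1_r by lra. nra.
Qed.

Section SecondDerivatives.

Variables (H H1 H2 V u u1 u2 m m1 m2 : R -> R) (alpha eps : R).

Hypotheses (C1_H : is_C1 H) (C1_H1 : is_C1 H1) (C1_H2 : is_C1 H2) (H2_ge0 : forall p, 0 <= H2 p)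
  (C1_V : is_C1 V) (C1_u : is_C1 u) (C1_u1 : is_C1 u1) (C1_m : is_C1 m) (C1_m1 : is_C1 m1)
  (m_gt0 : forall x, 0 < m x) (eps_gt0 : 0 < eps).

Hypothesis eq_u : forall x,
  u x - u2 x + H (u1 x) + V x = Rpower (m x) alpha + eps * (m x - m2 x).
Hypothesis eq_m : forall x,
  m x - m2 x - (H2 (u1 x) * u2 x * m x + H1 (u1 x) * m1 x) = 1 - eps * (u x - u2 x).

Let k x := H2 (u1 x) * m x + eps.
Let a x := Rpower (m x) alpha + eps * m x - u x - H (u1 x) - V x.
Let b x := 1 - eps * u x - m x + H1 (u1 x) * m1 x.

Lemma determinant_gt0 (x : R) : 0 < 1 + eps * k x.
Proof.
  unfold k. pose proof (H2_ge0 (u1 x)). pose proof (m_gt0 x).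
  assert (0 <= H2 (u1 x) * m x) by nra. nra.
Qed.

Lemma second_derivatives_solution (x : R) :
  u2 x = - (a x + eps * b x) / (1 + eps * k x) /\ m2 x = - b x - k x * u2 x.
Proof.
  apply linear_system_solution; [apply determinant_gt0 | |];
    unfold a, b, k; [pose proof (eq_u x) | pose proof (eq_m x)]; nra.
Qed.

Lemma C1_u2 : is_C1 u2.
Proof.
  apply (C1_ext (fun x => - (a x + eps * b x) / (1 + eps * k x)));
    [intros x; symmetry; apply second_derivatives_solution |].
  unfold a, b, k. solve_C1; [exact m_gt0 |]. intros x. pose proof (determinant_gt0 x). unfold k in *. lra.
Qed.

Lemma C1_m2 : is_C1 m2.
Proof.
  pose proof C1_u2.
  apply (C1_ext (fun x => - b x - k x * u2 x));
    [intros x; symmetry; apply second_derivatives_solution |].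
  unfold b, k. solve_C1.
Qed.

End SecondDerivatives.

Theorem mainTheorem7
  (H dH : R -> R) (V : R -> R) (alpha eps gamma : R)
  (C1 C2 C3 D1 D2 D3 : R)
  (u u1 u2 m m1 m2 g : R -> R) :
  (forall p, derivable_pt_lim H p (dH p)) ->
  periodic1 V -> continuity V ->
  0 < alpha -> 0 < eps -> eps <= 1 ->
  1 < gamma -> 0 < C1 -> 0 < C2 -> 0 < C3 ->
  (forall p, - C1 + C2 * Rpower (Rabs p) gamma <= H p /\
             H p <= C1 + C3 * Rpower (Rabs p) gamma) ->
  0 < D1 -> 0 < D2 -> 0 < D3 ->
  (forall p, - D1 + D2 * Rpower (Rabs p) gamma <= p * dH p - H p /\
             p * dH p - H p <= D1 + D3 * Rpower (Rabs p) gamma) ->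
  Ck 2 V ->
  convex_fun H ->
  Ck 4 H ->
  periodic1 u -> periodic1 m ->
  (forall x, derivable_pt_lim u x (u1 x)) ->
  (forall x, derivable_pt_lim u1 x (u2 x)) -> continuity u2 ->
  (forall x, derivable_pt_lim m x (m1 x)) ->
  (forall x, derivable_pt_lim m1 x (m2 x)) -> continuity m2 ->
  (forall x, 0 < m x) ->
  (forall x, derivable_pt_lim (fun y => dH (u1 y) * m y) x (g x)) ->
  (forall x, u x - u2 x + H (u1 x) + V x
             = Rpower (m x) alpha + eps * (m x - m2 x)) ->
  (forall x, m x - m2 x - g x = 1 - eps * (u x - u2 x)) ->
  holder_half u2 /\ holder_half m2.
Proof.
  intros DH _ _ _ eps_gt0 _ _ _ _ _ _ _ _ _ _ CV Cvx CH Pu Pm Du Du1 Cu2 Dm Dm1 Cm2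
    m_gt0 Dflux Eu Em.
  pose proof CH as [H1 [DH1 CH1]]. pose proof CH1 as [H2 [DH2 CH2]].
  replace dH with H1 in Dflux by (apply functional_extensionality; intros p;
    exact (uniqueness_limite H p _ _ (DH1 p) (DH p))).
  assert (Em' : forall x, m x - m2 x - (H2 (u1 x) * u2 x * m x + H1 (u1 x) * m1 x)
                          = 1 - eps * (u x - u2 x)).
  { intros x. rewrite <- Em. do 2 f_equal.
    exact (uniqueness_limite _ x _ _ (flux_derivative H1 H2 u1 u2 m m1 x DH2 (Du1 x) (Dm x))
             (Dflux x)). }
  pose proof (convex_second_derivative_ge0 H H1 H2 Cvx DH1 DH2 (Ck_continuity 2 H2 CH2))
    as H2_ge0.
  destruct (C2_C1 u u1 u2 Du Du1 Cu2) as [Cu Cu1].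
  destruct (C2_C1 m m1 m2 Dm Dm1 Cm2) as [Cm Cm1].
  pose proof (Ck_S_C1 _ _ CH) as CH0. pose proof (Ck_S_C1 _ _ CH1) as CH1'.
  pose proof (Ck_S_C1 _ _ CH2) as CH2'. pose proof (Ck_S_C1 _ _ CV) as CV'.
  split; apply periodic1_C1_holder_half.
  - exact (periodic1_derivative u1 u2 (periodic1_derivative u u1 Pu Du) Du1).
  - exact (C1_u2 H H1 H2 V u u1 u2 m m1 m2 alpha eps CH0 CH1' CH2' H2_ge0 CV' Cu Cu1 Cm Cm1
             m_gt0 eps_gt0 Eu Em').
  - exact (periodic1_derivative m1 m2 (periodic1_derivative m m1 Pm Dm) Dm1).
  - exact (C1_m2 H H1 H2 V u u1 u2 m m1 m2 alpha eps CH0 CH1' CH2' H2_ge0 CV' Cu Cu1 Cm Cm1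
             m_gt0 eps_gt0 Eu Em').
Qed.
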